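(* For every integer $r\ge2$, the Dehn function of $K^3_r(r)$ satisfies $\delta_{K^3_r(r)}(N)\succcurlyeq N^4$.
   Context: For $\alpha\in\{1,2,3\}$ let $F^{(\alpha)}$ be the free group on $a^{(\alpha)}_1,\dots,a^{(\alpha)}_r$, and let $K^3_r(r)$ be the kernel of the homomorphism $F^{(1)}\times F^{(2)}\times F^{(3)}\to\mathbb Z^r$ sending each $a^{(\alpha)}_j$ to the $j$-th standard basis vector $e_j$ (it is finitely presented). The Dehn function of a finitely presented $G=\langle S\mid\mathcal R\rangle$ is $\delta_G(N)=\max\{\mathrm{Area}(w):|w|\le N,\ w=_G1\}$, where $\mathrm{Area}(w)$ is the least number of conjugates of elements of $\mathcal R^{\pm1}$ whose product is $w$ in $F(S)$. $g\succcurlyeq f$ means $f(N)\le Cg(CN+C)+CN+C$ for some $C>0$. *)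

From mathcomp Require Import all_boot all_order all_algebra.
Set Implicit Arguments. Unset Strict Implicit. Unset Printing Implicit Defensive.
Import GRing.Theory Num.Theory.

(* A letter over an alphabet A: (a, false) = a, (a, true) = a^-1. *)
Definition word (A : Type) := seq (A * bool).

Section FreeGroup.
Variable A : eqType.

Fixpoint freduce (w : word A) : word A :=
  match w with
  | [::] => [::]
  | x :: w' =>
      match freduce w' with
      | y :: v => if (y.1 == x.1) && (y.2 != x.2) then v else x :: y :: v
      | [::] => [:: x]
      end
  end.

Definition feq (u v : word A) : Prop := freduce u = freduce v.

Definition winv (w : word A) : word A := rev (map (fun x => (x.1, ~~ x.2)) w).

Definition wpow (w : word A) (e : bool) : word A := if e then winv w else w.

Definition area_rep (R : seq (word A)) (w : word A) (k : nat) : Prop :=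
  exists l : seq (word A * word A * bool),
    [/\ size l = k,
        all (fun p => p.1.2 \in R) l &
        feq w (flatten (map (fun p => p.1.1 ++ wpow p.1.2 p.2 ++ winv p.1.1) l))].

Definition rel_trivial (R : seq (word A)) (w : word A) : Prop :=
  exists k, area_rep R w k.

Definition is_area (R : seq (word A)) (w : word A) (n : nat) : Prop :=
  area_rep R w n /\ forall m, area_rep R w m -> n <= m.

Definition is_dehn_function (R : seq (word A)) (d : nat -> nat) : Prop :=
  forall N,
    (exists w, [/\ size w <= N, rel_trivial R w & is_area R w (d N)]) /\
    (forall w n, size w <= N -> rel_trivial R w -> is_area R w n -> n <= d N).

End FreeGroup.

Definition dehn_dominates (g f : nat -> nat) : Prop :=
  exists C : nat, 0 < C /\ forall N, f N <= C * g (C * N + C) + C * N + C.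

(* The group F^(1) x F^(2) x F^(3), each F^(α) free on a^(α)_1..a^(α)_r:
   an element is a triple of words (indexed by α : 'I_3) over 'I_r,
   equality being componentwise free equality. *)
Definition triple (r : nat) := 'I_3 -> word 'I_r.

Definition triple_eq r (t t' : triple r) : Prop := forall a, feq (t a) (t' a).

Definition expsum r (w : word 'I_r) (j : 'I_r) : int :=
  \sum_(x <- w | x.1 == j) (if x.2 then (-1)%R else 1%R).

(* K^3_r(r): kernel of the map sending every a^(α)_j to e_j in Z^r *)
Definition in_K r (t : triple r) : Prop :=
  forall j : 'I_r, (\sum_(a < 3) expsum (t a) j)%R = 0%R.

Definition eval_word r (S : Type) (phi : S -> triple r) (w : word S) : triple r :=
  fun a => flatten (map (fun x => wpow (phi x.1 a) x.2) w).

Definition presents_K r (S : finType) (phi : S -> triple r) (R : seq (word S)) : Prop :=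
  [/\ forall s, in_K (phi s),
      forall t : triple r, in_K t -> exists w : word S, triple_eq (eval_word phi w) t &
      forall w : word S, triple_eq (eval_word phi w) (fun _ => [::]) <-> rel_trivial R w].

From HB Require Import structures.
From mathcomp Require Import all_boot all_order all_algebra ring zify.
From Stdlib Require Import Classical Wf_nat.
Set Implicit Arguments. Unset Strict Implicit. Unset Printing Implicit Defensive.
Import GRing.Theory Num.Theory.

(* Killing the generators a_j, j >= 2, and projecting each free factor onto a
   class-3 nilpotent group [nil3] maps K^3_r(r) into the group of balanced triples in
   nil3^3 (the x- and y-exponent sums vanish).  That group has a central extension [cext]
   by Z, given by an explicit polynomial 2-cocycle.  Lifting the generators of a finite
   presentation of K^3_r(r) to [cext] sends every null-homotopic word to a central element,
   and a product of k conjugates of relators to one of size at most k times a constant.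
   For a = (a_1, a_1^-1, 1), b = (a_2, 1, a_2^-1) and c = (1, a_2, a_2^-1) in K^3_r(r), the
   word [[a^n, b^n], [a^-n, c^n]] has length O(n) and central value 4 n^4, so its area
   grows at least like n^4. *)

Section FreeReduction.
Variable A : eqType.
Implicit Types (u v w : word A) (x y : A * bool).

Definition letter_inv x : A * bool := (x.1, ~~ x.2).
Definition cancels x y : bool := (y.1 == x.1) && (y.2 != x.2).

Definition cons_reduce x w : word A :=
  if w is y :: v then (if cancels x y then v else x :: w) else [:: x].

Definition reduced w : bool := sorted (fun x y => ~~ cancels x y) w.

Lemma freduce_cons x w : freduce (x :: w) = cons_reduce x (freduce w).
Proof. by rewrite /=; case: (freduce w). Qed.

Lemma cancels_inv x y : cancels x y -> y = letter_inv x.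
Proof. by case: x y => a [] [b []] /andP[/= /eqP-> ]. Qed.

Lemma reduced_cons_reduce x w : reduced w -> reduced (cons_reduce x w).
Proof.
case: w => //= y v red_yv; case: ifP => [_ | /negbT ncxy]; last by rewrite /= ncxy.
exact: path_sorted red_yv.
Qed.

Lemma reduced_freduce w : reduced (freduce w).
Proof. by elim: w => // x w IH; rewrite freduce_cons reduced_cons_reduce. Qed.

Lemma cons_reduceK x w : reduced w -> cons_reduce x (cons_reduce (letter_inv x) w) = w.
Proof.
have cancels_inv_l y : cancels y (letter_inv y) by case: y => a []; rewrite /cancels /= eqxx.
case: w => [|y v]; first by rewrite /= cancels_inv_l.
rewrite /=; case: ifP => [/cancels_inv -> | _ _]; last by rewrite /= cancels_inv_l.
rewrite /letter_inv /= negbK -[(x.1, x.2)]surjective_pairing.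
by case: v => //= z v /andP[/negbTE -> _].
Qed.

Lemma freduce_cat u v : freduce (u ++ v) = foldr cons_reduce (freduce v) u.
Proof. by elim: u => //= x u IH; rewrite -IH -freduce_cons. Qed.

Lemma reduced_foldr_cons_reduce u w : reduced w -> reduced (foldr cons_reduce w u).
Proof. by move=> red_w; elim: u => //= x u; apply: reduced_cons_reduce. Qed.

Lemma foldr_cons_reduce_freduce u w :
  reduced w -> foldr cons_reduce w u = foldr cons_reduce w (freduce u).
Proof.
move=> red_w; elim: u => // x u IH; rewrite freduce_cons /= IH.
case: (freduce u) => [|y v] //=; case: ifP => [/cancels_inv -> | _] //.
by rewrite cons_reduceK // reduced_foldr_cons_reduce.
Qed.

Lemma feq_cat u u' v v' : feq u u' -> feq v v' -> feq (u ++ v) (u' ++ v').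
Proof.
rewrite /feq !freduce_cat => eq_u ->.
rewrite (foldr_cons_reduce_freduce u) ?reduced_freduce //.
by rewrite (foldr_cons_reduce_freduce u') ?reduced_freduce // eq_u.
Qed.

Lemma feq_catl w u u' : feq u u' -> feq (w ++ u) (w ++ u').
Proof. exact: feq_cat. Qed.

Lemma feq_catr w u u' : feq u u' -> feq (u ++ w) (u' ++ w).
Proof. by move/feq_cat; apply. Qed.

Lemma winv_cons x u : winv (x :: u) = winv u ++ [:: letter_inv x].
Proof. by rewrite /winv /= rev_cons cats1. Qed.

Lemma winv_cat u v : winv (u ++ v) = winv v ++ winv u.
Proof. by rewrite /winv map_cat rev_cat. Qed.

Lemma winvK : involutive (@winv A).
Proof.
by move=> u; rewrite /winv map_rev revK -map_comp map_id_in // => -[a b] _ /=; rewrite negbK.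
Qed.

Lemma size_winv u : size (winv u) = size u.
Proof. by rewrite /winv size_rev size_map. Qed.

Lemma freduce_cat_winv u v : freduce (u ++ winv u ++ v) = freduce v.
Proof.
elim: u v => // x u IH v; rewrite winv_cons -catA cat_cons freduce_cons IH.
by rewrite cat1s freduce_cons cons_reduceK ?reduced_freduce.
Qed.

Lemma feq_cat_winv u : feq (u ++ winv u) [::].
Proof. by rewrite /feq -[winv u]cats0 catA -catA freduce_cat_winv. Qed.

Lemma feq_winv_nil u : feq u [::] -> feq (winv u) [::].
Proof.
move=> u1; have := feq_cat_winv (winv u); rewrite winvK /feq => <-.
by rewrite -{1}[winv u]cats0 (feq_catl _ u1).
Qed.

Definition wexp u n : word A := flatten (nseq n u).
Definition comw u v : word A := winv u ++ winv v ++ u ++ v.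

Lemma size_wexp u n : size (wexp u n) = n * size u.
Proof. by elim: n => //= n IH; rewrite size_cat IH mulSn. Qed.

Lemma size_comw u v : size (comw u v) = 2 * (size u + size v).
Proof. rewrite /comw !size_cat !size_winv; lia. Qed.

Lemma feq_wexp_nil u n : feq u [::] -> feq (wexp u n) [::].
Proof. by move=> u1; elim: n => //= n IH; apply: (feq_cat u1 IH). Qed.

Lemma feq_comw_nil_l u v : feq u [::] -> feq (comw u v) [::].
Proof.
move=> u1; rewrite /feq /comw (feq_catr _ (feq_winv_nil u1)) (feq_catl _ (feq_catr _ u1)).
by rewrite -{2}[v]winvK feq_cat_winv.
Qed.

Lemma feq_comw_nil_r u v : feq v [::] -> feq (comw u v) [::].
Proof.
move=> v1; rewrite /feq /comw (feq_catl _ (feq_catr _ (feq_winv_nil v1))).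
by rewrite (feq_catl _ (feq_catl _ v1)) cats0 -{2}[u]winvK feq_cat_winv.
Qed.

End FreeReduction.

Section Presentations.
Variables (A : eqType) (R : seq (word A)).

Lemma relator_rel_trivial q : q \in R -> rel_trivial R q.
Proof.
move=> qR; exists 1, [:: (([::], q), false)]; split; rewrite //= ?qR //.
by rewrite /feq /winv /= !cats0.
Qed.

Lemma area_exists w : rel_trivial R w -> exists n, is_area R w n.
Proof.
case=> k area_k.
have [n [[area_n min_n] _]] :=
  dec_inh_nat_subset_has_unique_least_element (area_rep R w) (fun n => classic _)
    (ex_intro _ k area_k).
by exists n; split => // m /min_n /leP.
Qed.

Lemma dehn_dominates_of_words d f (C : nat) (w : nat -> word A) :
  is_dehn_function R d -> 0 < C ->
  (forall N, size (w N) <= C * N + C) -> (forall N, rel_trivial R (w N)) ->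
  (forall N k, area_rep R (w N) k -> f N <= C * k) ->
  dehn_dominates d f.
Proof.
move=> hd C_gt0 size_w triv_w area_w; exists C; split => // N.
have [k area_k] := area_exists (triv_w N).
have le_k := (hd _).2 _ _ (size_w N) (triv_w N) area_k.
rewrite -addnA (leq_trans (area_w N k area_k.1)) // (leq_trans _ (leq_addr _ _)) //.
by rewrite leq_mul2l le_k orbT.
Qed.

End Presentations.

Section EvalWord.
Variables (r : nat) (S : eqType) (phi : S -> triple r).
Implicit Types (u v w : word S).

Lemma eval_word_cat u v a :
  eval_word phi (u ++ v) a = eval_word phi u a ++ eval_word phi v a.
Proof. by rewrite /eval_word map_cat flatten_cat. Qed.

Lemma eval_word_winv w a : eval_word phi (winv w) a = winv (eval_word phi w a).
Proof.
elim: w => // x w IH; rewrite winv_cons eval_word_cat IH winv_cat.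
by rewrite /eval_word /= cats0; case: x.2; rewrite /= ?winvK.
Qed.

Lemma eval_word_wexp w n a : eval_word phi (wexp w n) a = wexp (eval_word phi w a) n.
Proof. by elim: n => //= n IH; rewrite eval_word_cat IH. Qed.

Lemma eval_word_comw u v a :
  eval_word phi (comw u v) a = comw (eval_word phi u a) (eval_word phi v a).
Proof. by rewrite /comw !eval_word_cat !eval_word_winv. Qed.

End EvalWord.

Local Open Scope group_scope.

Definition weval (G : groupType) (A : Type) (f : A -> G) (w : word A) : G :=
  \prod_(x <- w) (if x.2 then (f x.1)^-1 else f x.1).

Section WordEvaluation.
Variables (G : groupType) (A : eqType) (f : A -> G).
Implicit Types (u v w : word A).

Lemma eq_weval (g : A -> G) : f =1 g -> weval f =1 weval g.
Proof. by move=> fg w; apply: eq_bigr => x _; rewrite fg. Qed.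

Lemma weval_cat u v : weval f (u ++ v) = weval f u * weval f v.
Proof. exact: big_cat. Qed.

Lemma weval_cons_reduce x w : weval f (cons_reduce x w) = weval f (x :: w).
Proof.
case: w => //= y v; case: ifP => // /cancels_inv ->.
by rewrite /weval !big_cons /= mulgA; case: x.2; rewrite ?mulVg ?mulgV mul1g.
Qed.

Lemma weval_freduce w : weval f (freduce w) = weval f w.
Proof.
elim: w => // x w IH.
by rewrite freduce_cons weval_cons_reduce /weval !big_cons -/(weval f _) IH.
Qed.

Lemma weval_feq u v : feq u v -> weval f u = weval f v.
Proof. by rewrite -weval_freduce => ->; rewrite weval_freduce. Qed.

Lemma weval_winv w : weval f (winv w) = (weval f w)^-1.
Proof.
rewrite /weval /winv -[w in RHS]revK -prodgV -map_rev big_map.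
by apply: eq_bigr => -[a []] _ //=; rewrite invgK.
Qed.

Lemma weval_wpow w e : weval f (wpow w e) = if e then (weval f w)^-1 else weval f w.
Proof. by case: e; rewrite /= ?weval_winv. Qed.

Lemma weval_wexp w n : weval f (wexp w n) = weval f w ^+ n.
Proof.
elim: n => [|n IH]; first by rewrite /weval big_nil.
by rewrite /wexp /= weval_cat -/(wexp w n) IH expgS.
Qed.

Lemma weval_comw u v : weval f (comw u v) = [~ weval f u, weval f v].
Proof. by rewrite /comw !weval_cat !weval_winv. Qed.

Lemma weval_flatten (B : Type) (g : B -> word A) (s : seq B) :
  weval f (flatten (map g s)) = \prod_(b <- s) weval f (g b).
Proof.
elim: s => [|b s IH]; first by rewrite /weval !big_nil.
by rewrite big_cons -IH -weval_cat.
Qed.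

Lemma weval_subst (B : Type) (g : B -> word A) (w : word B) :
  weval f (flatten (map (fun x => wpow (g x.1) x.2) w)) = weval (fun b => weval f (g b)) w.
Proof. by rewrite weval_flatten; apply: eq_bigr => x _; rewrite weval_wpow. Qed.

Lemma weval_morph (H : groupType) (h : G -> H) :
  {morph h : a b / a * b} -> h 1 = 1 -> forall w, h (weval f w) = weval (h \o f) w.
Proof.
move=> hM h1 w; rewrite /weval (big_morph h hM h1); apply: eq_bigr => -[a []] _ //=.
by apply/esym/mulg1_eq; rewrite -hM mulgV.
Qed.

End WordEvaluation.

Record nil3 := Nil3 { nx : int; ny : int; nm : int; ns : int; nt : int }.

Definition nil3_coords g := (nx g, ny g, nm g, ns g, nt g).
Definition coords_nil3 c := let: (x, y, m, s, t) := c in Nil3 x y m s t.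
Lemma nil3_coordsK : cancel nil3_coords coords_nil3. Proof. by case. Qed.
HB.instance Definition _ := Choice.copy nil3 (can_type nil3_coordsK).

Section Nil3Group.
Local Open Scope ring_scope.

(* X = Nil3 1 0 0 0 0 and Y = Nil3 0 1 0 0 0 generate a free nilpotent subgroup of class 3
   and finite index. *)

Definition nil3_mul (g h : nil3) : nil3 :=
  Nil3 (nx g + nx h) (ny g + ny h) (nm g + nm h + nx g * ny h)
       (ns g + ns h + nm g * nx h + nx g * (nx h * ny h - nm h))
       (nt g + nt h + (nx g * ny g - nm g) * ny h + ny g * nm h).
Definition nil3_one : nil3 := Nil3 0 0 0 0 0.
Definition nil3_inv (g : nil3) : nil3 :=
  Nil3 (- nx g) (- ny g) (nx g * ny g - nm g) (- ns g) (- nt g).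

Lemma nil3_mulA : associative nil3_mul.
Proof. by move=> [? ? ? ? ?] [? ? ? ? ?] [? ? ? ? ?]; congr Nil3 => /=; ring. Qed.
Lemma nil3_mul1 : left_id nil3_one nil3_mul.
Proof. by move=> [? ? ? ? ?]; congr Nil3 => /=; ring. Qed.
Lemma nil3_mulg1 : right_id nil3_one nil3_mul.
Proof. by move=> [? ? ? ? ?]; congr Nil3 => /=; ring. Qed.
Lemma nil3_mulVg : left_inverse nil3_one nil3_inv nil3_mul.
Proof. by move=> [? ? ? ? ?]; congr Nil3 => /=; ring. Qed.
Lemma nil3_mulgV : right_inverse nil3_one nil3_inv nil3_mul.
Proof. by move=> [? ? ? ? ?]; congr Nil3 => /=; ring. Qed.

End Nil3Group.

HB.instance Definition _ :=
  isGroup.Build nil3 nil3_mulA nil3_mul1 nil3_mulg1 nil3_mulVg nil3_mulgV.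

Lemma nil3_mulE (g h : nil3) : g * h = nil3_mul g h. Proof. by []. Qed.
Lemma nil3_invE (g : nil3) : g^-1 = nil3_inv g. Proof. by []. Qed.
Lemma nil3_oneE : 1 = Nil3 0 0 0 0 0. Proof. by []. Qed.

Definition nil3_letter r (j : 'I_r) : nil3 :=
  if val j == 0%N then Nil3 1 0 0 0 0 else if val j == 1%N then Nil3 0 1 0 0 0 else 1.

Definition to_nil3 r (u : word 'I_r) : nil3 := weval (@nil3_letter r) u.

Lemma to_nil3_cons r (x : 'I_r * bool) u :
  to_nil3 (x :: u) = (if x.2 then (nil3_letter x.1)^-1 else nil3_letter x.1) * to_nil3 u.
Proof. exact: big_cons. Qed.

Lemma expsum_cons r (x : 'I_r * bool) u j :
  expsum (x :: u) j = ((if x.1 == j then (if x.2 then -1 else 1) else 0) + expsum u j)%R.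
Proof. by rewrite /expsum big_cons; case: ifP; rewrite ?add0r. Qed.

Lemma nx_to_nil3 r (j : 'I_r) u : val j = 0%N -> nx (to_nil3 u) = expsum u j.
Proof.
move=> j0; elim: u => [|[i e] u IH]; first by rewrite /expsum /to_nil3 /weval !big_nil.
rewrite to_nil3_cons expsum_cons -IH -(inj_eq val_inj) j0 /nil3_letter /=.
by case: i => -[|[|k]] ? /=; case: e.
Qed.

Lemma ny_to_nil3 r (j : 'I_r) u : val j = 1%N -> ny (to_nil3 u) = expsum u j.
Proof.
move=> j1; elim: u => [|[i e] u IH]; first by rewrite /expsum /to_nil3 /weval !big_nil.
rewrite to_nil3_cons expsum_cons -IH -(inj_eq val_inj) j1 /nil3_letter /=.
by case: i => -[|[|k]] ? /=; case: e.
Qed.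

Definition balanced (g : 'I_3 -> nil3) : Prop :=
  (\sum_a nx (g a) = 0)%R /\ (\sum_a ny (g a) = 0)%R.

Lemma in_K_balanced r (j0 j1 : 'I_r) (t : triple r) :
  val j0 = 0%N -> val j1 = 1%N -> in_K t -> balanced (fun a => to_nil3 (t a)).
Proof.
move=> j0E j1E tK; split.
  by rewrite -[RHS](tK j0); apply: eq_bigr => a _; rewrite (nx_to_nil3 _ j0E).
by rewrite -[RHS](tK j1); apply: eq_bigr => a _; rewrite (ny_to_nil3 _ j1E).
Qed.

(* The central extension by Z of the group of balanced triples (g1, g2, g3) in nil3^3:
   g3 is stored by its last three coordinates, its first two being forced by balance.
   Associativity of [cext_mul] is the cocycle identity for [cocycle]. *)
Record cext := Cext { c1 : nil3; c2 : nil3; cm3 : int; cs3 : int; ct3 : int; cz : int }.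

Definition cext_coords e := (c1 e, c2 e, cm3 e, cs3 e, ct3 e, cz e).
Definition coords_cext c := let: (g1, g2, m, s, t, z) := c in Cext g1 g2 m s t z.
Lemma cext_coordsK : cancel cext_coords coords_cext. Proof. by case. Qed.
HB.instance Definition _ := Choice.copy cext (can_type cext_coordsK).

Definition c3 (e : cext) : nil3 :=
  Nil3 (- (nx (c1 e) + nx (c2 e)))%R (- (ny (c1 e) + ny (c2 e)))%R (cm3 e) (cs3 e) (ct3 e).

Section CextGroup.
Local Open Scope ring_scope.

Definition cocycle (a b : cext) : int :=
  let: Cext (Nil3 x1 y1 m1 s1 t1) (Nil3 x2 y2 m2 s2 t2) m3 s3 _ _ := a in
  let: Cext (Nil3 x1' y1' m1' _ _) (Nil3 x2' y2' m2' _ _) m3' _ t3' _ := b in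
  2 * ((s2 - s1) * (y1' + y2') - s3 * y1' + t2 * x1' - t1 * x2' - x2 * t3'
       + m3 * m1' + m2 * (2 * m3' - m2' - m1') - m1 * (m3' - m2')
       + x1 * m1' * y2' - x1 * y1' * (m3' - m2' - m1') + x1 * y1' ^+ 2 * x2'
       + x2 * y2' * (m3' - m2') - x2 * y1' * (m3' - m1') - x2 * x1' * y2' ^+ 2
       + 2 * m1 * y1' * x2' - 2 * m2 * x1' * y2'
       + (x1 * m2 + x2 * (m1 + m2 - m3)) * y1' + y1 * m1 * x2' - y2 * m2 * x1')
  - (x2 * y1') ^+ 2.

Definition cext_mul (a b : cext) : cext :=
  let g3 := (c3 a * c3 b)%g in
  Cext (c1 a * c1 b)%g (c2 a * c2 b)%g (nm g3) (ns g3) (nt g3) (cz a + cz b + cocycle a b).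

Definition cext_one : cext := Cext 1%g 1%g 0 0 0 0.

Definition cext_inv (a : cext) : cext :=
  let g3 := (c3 a)^-1%g in
  let b z := Cext (c1 a)^-1%g (c2 a)^-1%g (nm g3) (ns g3) (nt g3) z in
  b (- (cz a + cocycle a (b 0))).

End CextGroup.

Ltac cext_coords_ring :=
  rewrite /cext_mul /cext_inv /c3 /cocycle /= ?nil3_mulE ?nil3_invE ?nil3_oneE
    /nil3_mul /nil3_inv /=; congr Cext; try congr Nil3; rewrite /=; ring.

Lemma cext_mulA : associative cext_mul.
Proof.
by move=> [[? ? ? ? ?] [? ? ? ? ?] ? ? ? ?] [[? ? ? ? ?] [? ? ? ? ?] ? ? ? ?]
  [[? ? ? ? ?] [? ? ? ? ?] ? ? ? ?]; cext_coords_ring.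
Qed.
Lemma cext_mul1 : left_id cext_one cext_mul.
Proof. by move=> [[? ? ? ? ?] [? ? ? ? ?] ? ? ? ?]; cext_coords_ring. Qed.
Lemma cext_mulg1 : right_id cext_one cext_mul.
Proof. by move=> [[? ? ? ? ?] [? ? ? ? ?] ? ? ? ?]; cext_coords_ring. Qed.
Lemma cext_mulVg : left_inverse cext_one cext_inv cext_mul.
Proof. by move=> [[? ? ? ? ?] [? ? ? ? ?] ? ? ? ?]; cext_coords_ring. Qed.
Lemma cext_mulgV : right_inverse cext_one cext_inv cext_mul.
Proof. by move=> [[? ? ? ? ?] [? ? ? ? ?] ? ? ? ?]; cext_coords_ring. Qed.

HB.instance Definition _ :=
  isGroup.Build cext cext_mulA cext_mul1 cext_mulg1 cext_mulVg cext_mulgV.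

Lemma cext_mulE (a b : cext) : a * b = cext_mul a b. Proof. by []. Qed.
Lemma cext_invE (a : cext) : a^-1 = cext_inv a. Proof. by []. Qed.

Ltac cext_ring := rewrite ?cext_mulE ?cext_invE; cext_coords_ring.

Definition fac1 : 'I_3 := @Ordinal 3 0 isT.
Definition fac2 : 'I_3 := @Ordinal 3 1 isT.
Definition fac3 : 'I_3 := @Ordinal 3 2 isT.

Lemma sum_ord3 (F : 'I_3 -> int) : (\sum_a F a = F fac1 + F fac2 + F fac3)%R.
Proof.
by rewrite !big_ord_recr big_ord0 /= add0r; congr (F _ + F _ + F _)%R; apply: val_inj.
Qed.

Definition cproj (a : 'I_3) (e : cext) : nil3 :=
  match val a with 0 => c1 e | 1 => c2 e | _ => c3 e end.

Definition clift (g : 'I_3 -> nil3) (z : int) : cext :=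
  Cext (g fac1) (g fac2) (nm (g fac3)) (ns (g fac3)) (nt (g fac3)) z.

Definition central (z : int) : cext := Cext 1 1 0 0 0 z.

Lemma cproj_mul a : {morph cproj a : e f / e * f}.
Proof.
move=> e f; case: a => -[|[|[|//]]] ? //=; rewrite /cproj /= cext_mulE /cext_mul /c3 /=.
by rewrite !nil3_mulE /nil3_mul /=; congr Nil3; ring.
Qed.

Lemma cproj_one a : cproj a 1 = 1.
Proof. by case: a => -[|[|[|//]]]. Qed.

Lemma clift_cproj e : clift (cproj^~ e) (cz e) = e.
Proof. by case: e. Qed.

Lemma cproj_clift g z a : balanced g -> cproj a (clift g z) = g a.
Proof.
case=> sx sy; case: a => -[|[|[|//]]] i; rewrite /cproj /clift /c3 /=;
  try by congr g; apply: val_inj.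
have -> : Ordinal i = fac3 by apply: val_inj.
rewrite !sum_ord3 in sx sy; case: (g fac3) sx sy => x y m s t /= sx sy.
by congr Nil3; lia.
Qed.

Lemma eq_clift g g' z : g =1 g' -> clift g z = clift g' z.
Proof. by move=> gg'; rewrite /clift !gg'. Qed.

Lemma clift1 z : clift (fun=> 1) z = central z.
Proof. by []. Qed.

Lemma central_commute z e : commute (central z) e.
Proof.
by case: e => [[? ? ? ? ?] [? ? ? ? ?] ? ? ? ?]; rewrite /commute /central; cext_ring.
Qed.

Lemma centralD z z' : central z * central z' = central (z + z')%R.
Proof. by rewrite /central; cext_ring. Qed.

Lemma centralN z : (central z)^-1 = central (- z)%R.
Proof. by rewrite /central; cext_ring. Qed.

Section TestCommutator.
Local Open Scope ring_scope.

Definition lift_a (n z : int) : cext := Cext (Nil3 n 0 0 0 0) (Nil3 (- n) 0 0 0 0) 0 0 0 z.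
Definition lift_b (n z : int) : cext := Cext (Nil3 0 n 0 0 0) 1%g 0 0 0 z.
Definition lift_c (n z : int) : cext := Cext 1%g (Nil3 0 n 0 0 0) 0 0 0 z.

Lemma lift_a_expg z n : (lift_a 1 z ^+ n)%g = lift_a n%:Z (n%:Z * z).
Proof. by elim: n => [|n IH]; rewrite ?expgS ?IH ?intS /lift_a; cext_ring. Qed.

Lemma lift_b_expg z n : (lift_b 1 z ^+ n)%g = lift_b n%:Z (n%:Z * z).
Proof. by elim: n => [|n IH]; rewrite ?expgS ?IH ?intS /lift_b; cext_ring. Qed.

Lemma lift_c_expg z n : (lift_c 1 z ^+ n)%g = lift_c n%:Z (n%:Z * z).
Proof. by elim: n => [|n IH]; rewrite ?expgS ?IH ?intS /lift_c; cext_ring. Qed.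

Lemma lift_aV n z : (lift_a n z)^-1%g = lift_a (- n) (- z).
Proof. by rewrite /lift_a; cext_ring. Qed.

Lemma commg_lift_ab n za zb :
  [~ lift_a n za, lift_b n zb]%g = Cext (Nil3 0 0 (n ^+ 2) (n ^+ 3) (- n ^+ 3)) 1%g 0 0 0 (- n ^+ 4).
Proof. by rewrite /commg /conjg /lift_a /lift_b; cext_ring. Qed.

Lemma commg_lift_ac n za zc :
  [~ lift_a (- n) za, lift_c n zc]%g = Cext 1%g (Nil3 0 0 (n ^+ 2) (n ^+ 3) (- n ^+ 3)) 0 0 0 0.
Proof. by rewrite /commg /conjg /lift_a /lift_c; cext_ring. Qed.

Lemma commg_test_lift n za zb zc :
  [~ [~ lift_a n za, lift_b n zb], [~ (lift_a n za)^-1, lift_c n zc]]%g = central (4 * n ^+ 4).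
Proof. by rewrite lift_aV commg_lift_ab commg_lift_ac /commg /conjg /central; cext_ring. Qed.

End TestCommutator.

Definition diff_triple r (j : 'I_r) (a b : 'I_3) : triple r :=
  fun c => if c == a then [:: (j, false)] else if c == b then [:: (j, true)] else [::].

Lemma diff_triple_in_K r (j : 'I_r) (a b : 'I_3) : a != b -> in_K (diff_triple j a b).
Proof.
move=> ab j'; rewrite (bigD1 a) // (bigD1 b) 1?eq_sym //= big1 => [|c /andP[cb ca]].
  by rewrite /diff_triple eqxx eq_sym (negbTE ab) eqxx /expsum !big_cons !big_nil; case: (j == j').
by rewrite /diff_triple (negbTE ca) (negbTE cb) /expsum big_nil.
Qed.

Definition test_word (S : eqType) (wa wb wc : word S) n : word S :=
  comw (comw (wexp wa n) (wexp wb n)) (comw (winv (wexp wa n)) (wexp wc n)).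

Lemma size_test_word (S : eqType) (wa wb wc : word S) n :
  size (test_word wa wb wc n) = (n * (4 * (2 * size wa + size wb + size wc)))%N.
Proof. rewrite /test_word !size_comw size_winv !size_wexp; ring. Qed.

Lemma to_nil3_nil r : to_nil3 ([::] : word 'I_r) = 1.
Proof. exact: big_nil. Qed.

Lemma to_nil3_letter r (j : 'I_r) e :
  to_nil3 [:: (j, e)] = if e then (nil3_letter j)^-1 else nil3_letter j.
Proof. by rewrite to_nil3_cons to_nil3_nil mulg1. Qed.

Section ExtensionEvaluation.
Variables (r : nat) (S : finType) (phi : S -> triple r).
Hypothesis phi_balanced : forall s, balanced (fun a => to_nil3 (phi s a)).

Definition ext_gen (s : S) : cext := clift (fun a => to_nil3 (phi s a)) 0.
Local Notation ext_eval := (weval ext_gen).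

Lemma cproj_ext_eval a w : cproj a (ext_eval w) = to_nil3 (eval_word phi w a).
Proof.
rewrite (weval_morph _ (cproj_mul a) (cproj_one a)) /to_nil3 /eval_word.
by rewrite (weval_subst _ (fun s => phi s a)); apply: eq_weval => s; rewrite /= cproj_clift.
Qed.

Lemma ext_evalE w t :
  triple_eq (eval_word phi w) t -> ext_eval w = clift (fun a => to_nil3 (t a)) (cz (ext_eval w)).
Proof.
move=> wt; rewrite -{1}[ext_eval w]clift_cproj; apply: eq_clift => a.
by rewrite /= cproj_ext_eval; apply: weval_feq.
Qed.

Lemma ext_eval_central w :
  triple_eq (eval_word phi w) (fun=> [::]) -> ext_eval w = central (cz (ext_eval w)).
Proof.
by move/ext_evalE => {1}->; rewrite -clift1; apply: eq_clift => a; rewrite to_nil3_nil.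
Qed.

Section AreaBound.
Variable R : seq (word S).
Hypothesis R_trivial : forall q, q \in R -> triple_eq (eval_word phi q) (fun=> [::]).

Definition relator_bound : nat := \sum_(q <- R) `|cz (ext_eval q)|.

Lemma ext_eval_conjugates (l : seq (word S * word S * bool)) :
  all (fun p => p.1.2 \in R) l ->
  exists z, ext_eval (flatten (map (fun p => p.1.1 ++ wpow p.1.2 p.2 ++ winv p.1.1) l))
              = central z /\ (`|z| <= size l * relator_bound)%N.
Proof.
elim: l => [|[[u q] e] l IH] /=; first by exists 0%R; rewrite /weval big_nil.
case/andP => qR /IH [z [eq_z le_z]].
have le_q : `|cz (ext_eval q)| <= relator_bound.
  by rewrite /relator_bound (big_rem _ qR) leq_addr.
exists ((if e then - cz (ext_eval q) else cz (ext_eval q)) + z)%R; split.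
  rewrite !weval_cat eq_z weval_wpow weval_winv (ext_eval_central (R_trivial qR)).
  set zq := cz (ext_eval q).
  have -> : (if e then (central zq)^-1 else central zq) = central (if e then - zq else zq)%R.
    by case: e; rewrite ?centralN.
  by rewrite mulgA -(central_commute _ (ext_eval u)) mulgK centralD.
by rewrite mulSn; case: e; lia.
Qed.

Lemma cz_area_le w k : area_rep R w k -> (`|cz (ext_eval w)| <= k * relator_bound)%N.
Proof.
case=> l [<- allR eq_w]; rewrite (weval_feq _ eq_w).
by have [z [-> le_z]] := ext_eval_conjugates allR.
Qed.

End AreaBound.

Variables (j0 j1 : 'I_r) (wa wb wc : word S).
Hypotheses (j0E : val j0 = 0%N) (j1E : val j1 = 1%N).
Hypotheses (wa_eval : triple_eq (eval_word phi wa) (diff_triple j0 fac1 fac2))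
           (wb_eval : triple_eq (eval_word phi wb) (diff_triple j1 fac1 fac3))
           (wc_eval : triple_eq (eval_word phi wc) (diff_triple j1 fac2 fac3)).

Lemma test_word_trivial n : triple_eq (eval_word phi (test_word wa wb wc n)) (fun=> [::]).
Proof.
move=> a; rewrite /test_word !eval_word_comw eval_word_winv !eval_word_wexp.
case: a => -[|[|[|//]]] i.
- by apply/feq_comw_nil_r/feq_comw_nil_r/feq_wexp_nil; apply: wc_eval.
- by apply/feq_comw_nil_l/feq_comw_nil_r/feq_wexp_nil; apply: wb_eval.
- by apply/feq_comw_nil_l/feq_comw_nil_l/feq_wexp_nil; apply: wa_eval.
Qed.

Lemma test_word_ext_eval n : ext_eval (test_word wa wb wc n) = central (4 * n ^ 4)%N.
Proof.
have ea : ext_eval wa = lift_a 1 (cz (ext_eval wa)).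
  rewrite {1}(ext_evalE wa_eval) /clift /diff_triple /=.
  by rewrite !to_nil3_letter to_nil3_nil /nil3_letter j0E.
have eb : ext_eval wb = lift_b 1 (cz (ext_eval wb)).
  rewrite {1}(ext_evalE wb_eval) /clift /diff_triple /=.
  by rewrite !to_nil3_letter to_nil3_nil /nil3_letter j1E.
have ec : ext_eval wc = lift_c 1 (cz (ext_eval wc)).
  rewrite {1}(ext_evalE wc_eval) /clift /diff_triple /=.
  by rewrite !to_nil3_letter to_nil3_nil /nil3_letter j1E.
rewrite /test_word !weval_comw weval_winv !weval_wexp ea eb ec.
by rewrite lift_a_expg lift_b_expg lift_c_expg commg_test_lift PoszM.
Qed.

End ExtensionEvaluation.

Local Close Scope group_scope.

Theorem corollary4p17 (r : nat) (hr : 2 <= r)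
  (S : finType) (phi : S -> triple r) (R : seq (word S))
  (hP : presents_K phi R) (d : nat -> nat) (hd : is_dehn_function R d) :
  dehn_dominates d (fun N => N ^ 4).
Proof.
have [phi_K phi_onto phi_ker] := hP.
pose j0 : 'I_r := Ordinal (ltnW hr); pose j1 : 'I_r := Ordinal hr.
have phi_bal s : balanced (fun a => to_nil3 (phi s a)).
  exact: (in_K_balanced (j0 := j0) (j1 := j1)).
have R_triv q : q \in R -> triple_eq (eval_word phi q) (fun=> [::]).
  by move=> qR; apply/phi_ker/relator_rel_trivial.
have [wa wa_eval] := phi_onto _ (@diff_triple_in_K _ j0 fac1 fac2 isT).
have [wb wb_eval] := phi_onto _ (@diff_triple_in_K _ j1 fac1 fac3 isT).
have [wc wc_eval] := phi_onto _ (@diff_triple_in_K _ j1 fac2 fac3 isT).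
pose C := (4 * (2 * size wa + size wb + size wc) + relator_bound phi R).+1.
apply: (dehn_dominates_of_words (C := C) (w := test_word wa wb wc) hd) => // [N|N|N k area_k].
- rewrite size_test_word mulnC; apply: leq_trans (leq_addr C _).
  by rewrite leq_mul2r /C -addnS leq_addr orbT.
- exact/phi_ker/(test_word_trivial wa_eval wb_eval wc_eval N).
- have := cz_area_le phi_bal R_triv area_k.
  rewrite (test_word_ext_eval phi_bal (j0 := j0) (j1 := j1)) //= => le_area.
  apply: leq_trans (@leq_pmull (N ^ 4) 4 isT) (leq_trans le_area _).
  by rewrite mulnC leq_mul2r /C; lia.
Qed.
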